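(* For every sufficiently small $\varepsilon>0$ there exists $\gamma_0>0$ such that for every $\gamma\in(0,\gamma_0]$ there exists $n_0$ such that for all $n\ge n_0$: if $G$ is a graph on $n$ vertices with $\delta(G)\ge n/2$ that is $\gamma$-close to $2K_{n/2}$, then $G$ is an $\varepsilon$-superextremal two-clique with some partition $V(G)=A\uplus B$ satisfying (A1)–(A5), and moreover, either every vertex of $G$ has at least one neighbour in the other part (i.e. $G[A,B]$ has minimum degree at least $1$), or every vertex of one of the parts $A$, $B$ has at least $2$ neighbours in the other part.
   Context: A graph $G$ on $n$ vertices is $\gamma$-close to $2K_{n/2}$ if there exists $A\subseteq V(G)$ with $|A|=\lfloor n/2\rfloor$ such that the number of edges between $A$ and $V(G)\setminus A$ is at most $\gamma n^2$. For $X\subseteq V(G)$, $d(v,X)$ is the number of neighbours of $v$ in $X$. A graph $G$ on $n$ vertices is an $\varepsilon$-superextremal two-clique if there is a partition $V(G)=A\uplus B$ with: (A1) $||A|-|B||\le\varepsilon n$; (A2) $d(a,A)\ge(1/2-\varepsilon)n$ for all but at most $\varepsilon n$ vertices $a\in A$; (A3) $d(a,A)\ge(1/4-\varepsilon)n$ for all $a\in A$; (A4) $d(b,B)\ge(1/2-\varepsilon)n$ for all but at most $\varepsilon n$ vertices $b\in B$; (A5) $d(b,B)\ge(1/4-\varepsilon)n$ for all $b\in B$. *)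

(* Graphs on n vertices: vertex set 'I_n, edges given by a
   symmetric irreflexive boolean relation. Real parameters live in an
   arbitrary archimedean real field R (e.g. rat, or the reals). *)
From HB Require Import structures.
From mathcomp Require Import all_boot all_order all_algebra.
Set Implicit Arguments. Unset Strict Implicit. Unset Printing Implicit Defensive.
Import Order.TTheory GRing.Theory Num.Theory.
Local Open Scope ring_scope.

Definition simple_graph (n : nat) (e : rel 'I_n) : Prop :=
  symmetric e /\ irreflexive e.

Definition dX (n : nat) (e : rel 'I_n) (v : 'I_n) (X : {set 'I_n}) : nat :=
  #|[set u in X | e v u]|.

Definition deg (n : nat) (e : rel 'I_n) (v : 'I_n) : nat := dX e v [set: 'I_n].

Definition min_deg_half (R : realFieldType) (n : nat) (e : rel 'I_n) : Prop :=
  forall v : 'I_n, (n%:R / 2 : R) <= (deg e v)%:R.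

Definition cut_size (n : nat) (e : rel 'I_n) (A : {set 'I_n}) : nat :=
  #|[set p : 'I_n * 'I_n | (p.1 \in A) && (p.2 \notin A) && e p.1 p.2]|.

Definition gamma_close (R : realFieldType) (gamma : R) (n : nat) (e : rel 'I_n) : Prop :=
  exists A : {set 'I_n}, #|A| = n./2 /\ ((cut_size e A)%:R <= gamma * (n%:R) ^+ 2).

Definition superextremal_partition (R : realFieldType) (eps : R) (n : nat)
    (e : rel 'I_n) (A B : {set 'I_n}) : Prop :=
  [/\ `|(#|A|%:R - #|B|%:R : R)| <= eps * n%:R,
      (#|[set a in A | (dX e a A)%:R < (1 / 2 - eps) * n%:R]|%:R <= eps * n%:R),
      (forall a, a \in A -> (1 / 4 - eps) * n%:R <= (dX e a A)%:R),
      (#|[set b in B | (dX e b B)%:R < (1 / 2 - eps) * n%:R]|%:R <= eps * n%:R)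
    & (forall b, b \in B -> (1 / 4 - eps) * n%:R <= (dX e b B)%:R)].

Definition is_partition (n : nat) (A B : {set 'I_n}) : Prop :=
  A :&: B = set0 /\ A :|: B = [set: 'I_n].

(** Move every vertex to the side of the given near-bisection [A0] containing
    most of its neighbours.  Since the cut of [A0] has at most [gamma n^2] edges,
    at most [eps n / 8] vertices on either side send [eps n / 2] or more edges
    across, and only those can switch sides or lose many neighbours; this gives
    (A1)-(A5).  The minimum degree [n/2] alone forces a vertex of a part of size
    [k] to have at least [n/2 - k + 1] neighbours in the other part, which gives
    the final dichotomy according to whether the smaller part has size [n/2]. *)
From HB Require Import structures.
From mathcomp Require Import all_boot all_order all_algebra.
From mathcomp Require Import zify lra.
Set Implicit Arguments. Unset Strict Implicit. Unset Printing Implicit Defensive.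
Import Order.TTheory GRing.Theory Num.Theory.

Section Degrees.
Variables (n : nat) (e : rel 'I_n).
Implicit Types (v : 'I_n) (X Y : {set 'I_n}).

Lemma dX_sum v X : dX e v X = \sum_(u in X) e v u.
Proof.
rewrite /dX -sum1_card big_mkcond [RHS]big_mkcond /=.
by apply: eq_bigr => u _; rewrite inE; case: (u \in X); case: (e v u).
Qed.

Lemma dX_add_setC v X : dX e v X + dX e v (~: X) = deg e v.
Proof. by rewrite /deg !dX_sum [RHS](big_setID X) /= setTI setTD. Qed.

Lemma dX_lt_card v X : irreflexive e -> v \in X -> dX e v X < #|X|.
Proof.
move=> irr vX; rewrite (cardsD1 v X) vX add1n ltnS /dX.
apply: subset_leq_card; apply/subsetP => u; rewrite !inE => /andP[uX evu].
by rewrite uX andbT; apply: contraTneq evu => ->; rewrite irr.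
Qed.

Lemma dX_le_setD v X Y : dX e v X <= dX e v Y + #|X :\: Y|.
Proof.
rewrite /dX; apply: leq_trans (leq_card_setU _ _).
apply: subset_leq_card; apply/subsetP => u; rewrite !inE => /andP[uX ->].
by rewrite uX andbT; case: (u \in Y).
Qed.

Lemma cut_sizeE X : cut_size e X = \sum_(a in X) dX e a (~: X).
Proof.
rewrite /cut_size -sum1_card big_mkcond /=.
transitivity (\sum_(i : 'I_n) \sum_(j : 'I_n)
                (if (i \in X) && (j \notin X) && e i j then 1 else 0))%N.
  by rewrite pair_bigA /=; apply: eq_bigr => -[i j] _; rewrite inE.
apply/esym; rewrite big_mkcond; apply: eq_bigr => i _; rewrite dX_sum big_mkcond /=.
case: (i \in X) => /=; last by rewrite big1.
by apply: eq_bigr => j _; rewrite !inE; case: (j \in X); case: (e i j).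
Qed.

Lemma cut_sizeC X : symmetric e -> cut_size e (~: X) = cut_size e X.
Proof.
move=> sym; rewrite !cut_sizeE setCK.
under eq_bigr do rewrite dX_sum.
rewrite exchange_big /=; apply: eq_bigr => i _; rewrite dX_sum.
by apply: eq_bigr => j _; rewrite sym.
Qed.

Lemma min_deg_half_nat (R : realFieldType) v :
  min_deg_half R e -> (n <= 2 * deg e v)%N.
Proof. by move=> hdeg; rewrite -(ler_nat R) natrM; have := hdeg v; lra. Qed.

Lemma dX_setC_lower_bound v X : irreflexive e -> (n <= 2 * deg e v)%N ->
  v \in X -> (n + 2 <= 2 * #|X| + 2 * dX e v (~: X))%N.
Proof.
move=> irr hdeg vX; have := dX_lt_card irr vX; have := dX_add_setC v X; lia.
Qed.

Lemma min_deg_cross_neighbours X : irreflexive e ->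
  (forall v, n <= 2 * deg e v)%N ->
  [\/ (forall a, a \in X -> 1 <= dX e a (~: X))%N /\
      (forall b, b \in ~: X -> 1 <= dX e b X)%N,
      (forall a, a \in X -> 2 <= dX e a (~: X))%N
    | (forall b, b \in ~: X -> 2 <= dX e b X)%N].
Proof.
move=> irr hdeg.
have hX a : a \in X -> (n + 2 <= 2 * #|X| + 2 * dX e a (~: X))%N.
  exact: dX_setC_lower_bound (hdeg a).
have hXC b : b \in ~: X -> (n + 2 <= 2 * #|~: X| + 2 * dX e b X)%N.
  by move=> bX; have := dX_setC_lower_bound irr (hdeg b) bX; rewrite setCK.
have hcard : (#|X| + #|~: X| = n)%N by rewrite cardsC card_ord.
case: (ltngtP (2 * #|X|) n) => hXn.
- by apply: Or32 => a /hX; lia.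
- by apply: Or33 => b /hXC; lia.
- by apply: Or31; split=> [a /hX | b /hXC]; lia.
Qed.

End Degrees.

Local Open Scope ring_scope.

Definition cross_heavy (R : numDomainType) n (e : rel 'I_n) (t : R)
    (X : {set 'I_n}) : {set 'I_n} :=
  [set v in X | t <= (dX e v (~: X))%:R].

Definition majority_side n (e : rel 'I_n) (X : {set 'I_n}) : {set 'I_n} :=
  [set v | (dX e v (~: X) <= dX e v X)%N].

Lemma card_cross_heavy_le (R : numDomainType) n (e : rel 'I_n) (t : R) X :
  #|cross_heavy e t X|%:R * t <= (cut_size e X)%:R.
Proof.
have sub : cross_heavy e t X \subset X by apply/subsetP => v; rewrite inE => /andP[].
apply: (@le_trans _ _ (\sum_(v in cross_heavy e t X) (dX e v (~: X))%:R)).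
  by rewrite mulr_natl -sumr_const; apply: ler_sum => v; rewrite inE => /andP[].
rewrite -natr_sum ler_nat cut_sizeE [X in (_ <= X)%N](big_setID (cross_heavy e t X)).
by rewrite /= (setIidPr sub) leq_addr.
Qed.

Lemma light_dX_setC_lt (R : realFieldType) n (e : rel 'I_n) (t : R)
    (X : {set 'I_n}) v :
  min_deg_half R e -> t <= n%:R / 4 -> v \in X -> v \notin cross_heavy e t X ->
  (dX e v (~: X) < dX e v X)%N.
Proof.
move=> hdeg ht vX; rewrite inE vX /= -ltNge => hlight.
rewrite -(ltr_nat R); have := hdeg v; rewrite -(dX_add_setC e v X) natrD; lra.
Qed.

Section MajorityReassignment.
Variables (R : realFieldType) (eps gamma : R) (n : nat) (e : rel 'I_n).
Variables (X0 X : {set 'I_n}).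
Hypotheses (sym : symmetric e) (hdeg : min_deg_half R e).
Hypothesis cut_X0 : (cut_size e X0)%:R <= gamma * n%:R ^+ 2.
Hypotheses (eps_le : eps <= 1 / 4) (gamma_le : gamma <= eps * eps / 16).
Hypothesis eps_n_gt0 : 0 < eps * n%:R.
Hypothesis in_X : forall v, (dX e v (~: X0) < dX e v X0)%N -> v \in X.
Hypothesis notin_X : forall v, (dX e v X0 < dX e v (~: X0))%N -> v \notin X.

Let t := eps / 2 * n%:R.
Let H0 := cross_heavy e t X0.
Let H1 := cross_heavy e t (~: X0).

Let t_le : t <= n%:R / 4.
Proof.
have : 0 <= (1 / 4 - eps) * n%:R by rewrite mulr_ge0 ?subr_ge0.
have := ler0n R n; rewrite /t; lra.
Qed.

Let card_heavy_le Y : (cut_size e Y)%:R <= gamma * n%:R ^+ 2 ->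
  #|cross_heavy e t Y|%:R <= eps * n%:R / 8.
Proof.
move=> cutY; have heavyY := card_cross_heavy_le e t Y.
have gamma_n2 : gamma * n%:R ^+ 2 <= (eps * n%:R) ^+ 2 / 16.
  by rewrite exprMn mulrAC ler_wpM2r ?exprn_ge0 // expr2.
rewrite -(ler_pM2r eps_n_gt0); move: heavyY; rewrite /t expr2 in gamma_n2 *; lra.
Qed.

Let card_H0 : #|H0|%:R <= eps * n%:R / 8.
Proof. exact: card_heavy_le. Qed.

Let card_H1 : #|H1|%:R <= eps * n%:R / 8.
Proof. by apply: card_heavy_le; rewrite cut_sizeC. Qed.

Let setD_sub_H0 : X0 :\: X \subset H0.
Proof.
apply/subsetP => v; rewrite inE => /andP[vX vX0]; apply: contraNT vX => vH.
exact/in_X/(light_dX_setC_lt hdeg t_le vX0 vH).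
Qed.

Let setD_sub_H1 : X :\: X0 \subset H1.
Proof.
apply/subsetP => v; rewrite inE => /andP[vX0 vX]; apply: contraTT vX => vH.
apply: notin_X; have := light_dX_setC_lt hdeg t_le _ vH; rewrite setCK.
by apply; rewrite inE.
Qed.

Let dX_X0_le v : (dX e v X0 <= dX e v X + #|H0|)%N.
Proof. by apply: leq_trans (dX_le_setD e v X0 X) _; rewrite leq_add2l subset_leq_card. Qed.

Lemma normr_card_sub_le : `|#|X|%:R - #|X0|%:R| <= eps * n%:R / 8.
Proof.
have le_X0 : (#|X0| <= #|X| + #|H0|)%N.
  by rewrite -(cardsID X X0) leq_add ?subset_leq_card ?subsetIr.
have le_X : (#|X| <= #|X0| + #|H1|)%N.
  by rewrite -(cardsID X0 X) leq_add ?subset_leq_card ?subsetIr.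
move: le_X0 le_X; rewrite -!(ler_nat R) !natrD => le_X0 le_X.
have := card_H0; have := card_H1; rewrite ler_norml; lra.
Qed.

Lemma dX_self_ge a : a \in X -> (1 / 4 - eps) * n%:R <= (dX e a X)%:R.
Proof.
move=> aX; have maj : (dX e a (~: X0) <= dX e a X0)%N.
  by rewrite leqNgt; apply: contraL aX; apply: notin_X.
move: maj (dX_X0_le a); rewrite -!(ler_nat R) natrD => maj le_a.
have := eps_n_gt0; have := card_H0; have := hdeg a.
rewrite -(dX_add_setC e a X0) natrD; lra.
Qed.

Lemma card_low_dX_self_le :
  #|[set a in X | (dX e a X)%:R < (1 / 2 - eps) * n%:R]|%:R <= eps * n%:R.
Proof.
apply: (@le_trans _ _ (#|H0|%:R + #|H1|%:R)); last first.
  by have := eps_n_gt0; have := card_H0; have := card_H1; lra.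
rewrite -natrD ler_nat; apply: leq_trans (leq_card_setU H0 H1).
apply/subset_leq_card/subsetP => v; rewrite inE => /andP[vX low].
apply/negPn/negP; rewrite inE negb_or => /andP[vH0 vH1].
case vX0: (v \in X0).
- move: vH0; rewrite inE vX0 /= -ltNge /t => light.
  have := dX_X0_le v; rewrite -(ler_nat R) natrD => le_v.
  have := eps_n_gt0; have := card_H0; have := hdeg v.
  rewrite -(dX_add_setC e v X0) natrD; lra.
- by move/subsetP/(_ v): setD_sub_H1; rewrite inE vX0 vX (negbTE vH1) => /(_ isT).
Qed.

End MajorityReassignment.

Lemma majority_side_superextremal (R : realFieldType) (eps gamma : R) n
    (e : rel 'I_n) (A0 : {set 'I_n}) :
  symmetric e -> min_deg_half R e -> #|A0| = n./2 ->
  (cut_size e A0)%:R <= gamma * n%:R ^+ 2 ->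
  eps <= 1 / 4 -> gamma <= eps * eps / 16 -> 2 < eps * n%:R ->
  superextremal_partition eps e (majority_side e A0) (~: majority_side e A0).
Proof.
move=> sym hdeg cardA0 cutA0 eps_le gamma_le eps_n_gt2.
have eps_n_gt0 : 0 < eps * n%:R by lra.
set A := majority_side e A0.
have in_A v : (dX e v (~: A0) < dX e v A0)%N -> v \in A.
  by rewrite inE => /ltnW.
have notin_A v : (dX e v A0 < dX e v (~: A0))%N -> v \notin A.
  by rewrite inE -ltnNge.
have cutCA0 : (cut_size e (~: A0))%:R <= gamma * n%:R ^+ 2 by rewrite cut_sizeC.
have in_CA v : (dX e v (~: ~: A0) < dX e v (~: A0))%N -> v \in ~: A.
  by rewrite setCK inE => /notin_A.
have notin_CA v : (dX e v (~: A0) < dX e v (~: ~: A0))%N -> v \notin ~: A.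
  by rewrite setCK inE negbK => /in_A.
have near_A0 := normr_card_sub_le sym hdeg cutA0 eps_le gamma_le eps_n_gt0 in_A notin_A.
have card_parts : #|A|%:R + #|~: A|%:R = n%:R :> R.
  by rewrite -natrD cardsC card_ord.
have half_n : (n./2 * 2 <= n <= n./2 * 2 + 1)%N.
  by have := odd_double_half n; rewrite -mul2n; case: (odd n) => /=; lia.
split.
- move: half_n near_A0; rewrite cardA0 -!(ler_nat R) natrD !natrM ler_norml.
  by move=> /andP[half_lo half_hi] /andP[A_lo A_hi]; rewrite ler_norml; lra.
- exact: card_low_dX_self_le sym hdeg cutA0 eps_le gamma_le eps_n_gt0 in_A notin_A.
- exact: dX_self_ge hdeg cutA0 eps_le gamma_le eps_n_gt0 in_A notin_A.
- exact: card_low_dX_self_le sym hdeg cutCA0 eps_le gamma_le eps_n_gt0 in_CA notin_CA.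
- exact: dX_self_ge hdeg cutCA0 eps_le gamma_le eps_n_gt0 in_CA notin_CA.
Qed.

Lemma archi_bound_lt_mul (R : archiRealFieldType) (eps : R) n :
  0 < eps -> (Num.bound (2 / eps) <= n)%N -> 2 < eps * n%:R.
Proof.
move=> eps_gt0 n_ge; rewrite mulrC -ltr_pdivrMr //.
apply: lt_le_trans (archi_boundP _) _; first by rewrite ltW ?divr_gt0.
by rewrite ler_nat.
Qed.

Theorem mainTheorem7 (R : archiRealFieldType) :
  exists2 eps0 : R, 0 < eps0 &
  forall eps : R, 0 < eps -> eps <= eps0 ->
  exists2 gamma0 : R, 0 < gamma0 &
  forall gamma : R, 0 < gamma -> gamma <= gamma0 ->
  exists n0 : nat, forall n : nat, (n0 <= n)%N ->
  forall e : rel 'I_n,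
    simple_graph e ->
    min_deg_half R e ->
    gamma_close gamma e ->
    exists A B : {set 'I_n},
      [/\ is_partition A B,
          superextremal_partition eps e A B
        & [\/ (forall a, a \in A -> (1 <= dX e a B)%N) /\
              (forall b, b \in B -> (1 <= dX e b A)%N),
              (forall a, a \in A -> (2 <= dX e a B)%N)
            | (forall b, b \in B -> (2 <= dX e b A)%N)]].
Proof.
exists (1 / 4); first lra.
move=> eps eps_gt0 eps_le; exists (eps * eps / 16); first by rewrite divr_gt0 ?mulr_gt0.
move=> gamma _ gamma_le; exists (Num.bound (2 / eps)) => n n_ge e [sym irr] hdeg.
move=> [A0 [cardA0 cutA0]]; exists (majority_side e A0), (~: majority_side e A0).
split.
- by rewrite /is_partition setICr setUCr.
- apply: majority_side_superextremal sym hdeg cardA0 cutA0 eps_le gamma_le _.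
  exact: archi_bound_lt_mul.
- have := min_deg_cross_neighbours (majority_side e A0) irr.
  by apply=> v; apply: min_deg_half_nat hdeg.
Qed.
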